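(* Let $L(\lambda)\in\mathbb{C}[\lambda]^{m\times n}$ be a matrix pencil. Then $L(\lambda)$ is right invertible over $\mathbb{C}[\lambda]$ if and only if it has no finite eigenvalues and no left minimal indices. Moreover, in that case, there exists a polynomial right inverse of $L(\lambda)$ having degree at most $m-1$.
   Context: A matrix pencil is a polynomial matrix of degree at most $1$. $A(\lambda)\in\mathbb{C}[\lambda]^{m\times n}$ is right invertible over $\mathbb{C}[\lambda]$ if there is a polynomial matrix $A(\lambda)^R\in\mathbb{C}[\lambda]^{n\times m}$ with $A(\lambda)A(\lambda)^R=I_m$; by convention, if $m=0$ the empty $0\times n$ matrix is right invertible with right inverse its $n\times 0$ transpose. The normal rank of $L(\lambda)$ is its rank over the field $\mathbb{C}(\lambda)$; $\lambda_0\in\mathbb{C}$ is a finite eigenvalue if $\operatorname{rank}_{\mathbb{C}}L(\lambda_0)$ is less than the normal rank. The left null space is $\{y(\lambda)\in\mathbb{C}(\lambda)^m: y(\lambda)^*L(\lambda)=0\}$; the left minimal indices are the column degrees of a minimal polynomial basis of it (a polynomial basis with minimal sum of column degrees), so $L$ has no left minimal indices iff its left null space is $\{0\}$. *)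

From HB Require Import structures.
From mathcomp Require Import all_boot all_order all_algebra.
From mathcomp Require Import complex.
From mathcomp Require Import reals.
Set Implicit Arguments. Unset Strict Implicit. Unset Printing Implicit Defensive.
Import Order.TTheory GRing.Theory Num.Theory.
Local Open Scope ring_scope.

Definition pencil_to_frac (F : fieldType) (m n : nat) (L : 'M[{poly F}]_(m, n))
  : 'M[{fraction {poly F}}]_(m, n) := map_mx (@tofrac _) L.

Definition is_pencil (F : fieldType) (m n : nat) (L : 'M[{poly F}]_(m, n)) : Prop :=
  forall i j, (size (L i j) <= 2)%N.

Definition right_invertible (F : fieldType) (m n : nat) (L : 'M[{poly F}]_(m, n)) : Prop :=
  exists LR : 'M[{poly F}]_(n, m), L *m LR = 1%:M.

Definition normal_rank (F : fieldType) (m n : nat) (L : 'M[{poly F}]_(m, n)) : nat :=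
  \rank (pencil_to_frac L).

Definition finite_eigenvalue (F : fieldType) (m n : nat) (L : 'M[{poly F}]_(m, n)) (l0 : F) : Prop :=
  (\rank (map_mx (fun p => p.[l0]) L) < normal_rank L)%N.

Definition no_left_minimal_indices (F : fieldType) (m n : nat) (L : 'M[{poly F}]_(m, n)) : Prop :=
  forall y : 'rV[{fraction {poly F}}]_m, y *m pencil_to_frac L = 0 -> y = 0.

Definition mx_deg_le (F : fieldType) (m n : nat) (A : 'M[{poly F}]_(m, n)) (d : nat) : Prop :=
  forall i j, (size (A i j) <= d.+1)%N.

From HB Require Import structures.
From mathcomp Require Import all_boot all_order all_algebra.
From mathcomp Require Import complex.
From mathcomp Require Import reals.
Set Implicit Arguments. Unset Strict Implicit. Unset Printing Implicit Defensive.
Import Order.TTheory GRing.Theory Num.Theory.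
Local Open Scope ring_scope.

(* A polynomial right inverse of L specializes to right inverses of every
   evaluation L(x) and of L over C(lambda); this rules out finite eigenvalues
   and left minimal indices. Conversely, if every L(x) has full row rank, the
   maximal minors of L have no common root, so over an algebraically closed
   field a polynomial combination of them equals 1, and the same combination of
   the adjugates of the square column-submatrices is a right inverse.
   For the degree bound write L^T = P + lambda Q. The constants reachable as
   W L^T with deg W < k form the row space V_k = N_k P, where
   N_(k+1) = {y | y Q in V_k}. The V_k increase, and once V_(k+1) = V_k they
   stay constant; so they saturate after at most m steps, and the identity,
   reached by some right inverse at some stage, is reached at stage m. *)

Section PolyMatrixRightInverse.
Variables (F : fieldType) (m n : nat).
Implicit Types (L : 'M[{poly F}]_(m, n)) (x : F).

Lemma no_left_minimal_indicesP L :
  no_left_minimal_indices L <-> row_free (pencil_to_frac L).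
Proof.
split=> [noker | /row_free_inj inj y yL0].
  rewrite -kermx_eq0; apply/eqP/row_matrixP => i; rewrite row0.
  by apply: noker; rewrite -row_mul mulmx_ker row0.
by apply: inj; rewrite /= yL0 mul0mx.
Qed.

Lemma right_invertible_row_free_frac L :
  right_invertible L -> row_free (pencil_to_frac L).
Proof.
case=> X LX1; apply/row_freeP; exists (map_mx (@tofrac _) X).
by rewrite -map_mxM LX1 map_mx1.
Qed.

Lemma right_invertible_row_free_eval L x :
  right_invertible L -> row_free (map_mx (horner_eval x) L).
Proof.
case=> X LX1; apply/row_freeP; exists (map_mx (horner_eval x) X).
by rewrite -map_mxM LX1 map_mx1.
Qed.

Lemma finite_eigenvalueNP L x : row_free (pencil_to_frac L) ->
  ~ finite_eigenvalue L x <-> row_free (map_mx (horner_eval x) L).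
Proof.
rewrite /finite_eigenvalue /normal_rank /row_free => /eqP ->.
split=> [/negP | /eqP -> //]; first by rewrite -leqNgt eqn_leq rank_leq_row.
by rewrite ltnn.
Qed.

Lemma row_free_minor (E : 'M[F]_(m, n)) :
  row_free E -> exists f : 'I_n ^ m, \det (colsub f E) != 0.
Proof.
move=> freeE; have fullET : row_full E^T by rewrite /row_full mxrank_tr.
exists (fullrankfun fullET).
by rewrite -det_tr trmx_mxsub -unitfE -unitmxE fullrowsub_unit.
Qed.

Lemma horner_det_colsub L (f : 'I_n ^ m) x :
  (\det (colsub f L)).[x] = \det (colsub f (map_mx (horner_eval x) L)).
Proof. by rewrite -map_mxsub det_map_mx. Qed.

Lemma right_invertible_of_minors L (c : 'I_n ^ m -> {poly F}) :
  \sum_f c f * \det (colsub f L) = 1 -> right_invertible L.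
Proof.
move=> comb1; exists (\sum_f c f *: (colsub f 1%:M *m \adj (colsub f L))).
rewrite mulmx_sumr -[X in _ = X%:M]comb1 raddf_sum; apply: eq_bigr => f _.
by rewrite -scalemxAr mulmxA mulmx_colsub mulmx1 mul_mx_adj scale_scalar_mx.
Qed.

End PolyMatrixRightInverse.

Lemma biggcdp_combination (F : fieldType) (I : finType) (d : I -> {poly F})
    (s : seq I) :
  exists c : I -> {poly F}, \sum_i c i * d i %= \big[@gcdp F/0]_(j <- s) d j.
Proof.
elim: s => [|a s [c comb]].
  exists (fun=> 0); rewrite big_nil big1 ?eqpxx // => i _; exact: mul0r.
pose e := egcdp (d a) (\sum_i c i * d i).
exists (fun i => e.1 * (i == a)%:R + e.2 * c i).
have pick_a : \sum_i (i == a)%:R * d i = d a.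
  rewrite (bigD1 a) //= eqxx mul1r big1 ?addr0 // => i /negPf ->.
  exact: mul0r.
under eq_bigr do rewrite mulrDl -!mulrA.
rewrite big_split -!mulr_sumr pick_a big_cons eqp_sym.
by apply: eqp_trans (eqp_gcdr _ _) (egcdpE _ _); rewrite eqp_sym.
Qed.

Lemma bezout_of_no_common_root (F : closedFieldType) (I : finType)
    (d : I -> {poly F}) :
  (forall x, exists i, ~~ root (d i) x) ->
  exists c : I -> {poly F}, \sum_i c i * d i = 1.
Proof.
move=> nocommon; have [c comb] := biggcdp_combination d (enum I).
have : size (\sum_i c i * d i) == 1.
  rewrite (eqp_size comb); apply: contraT => /closed_rootP [x].
  rewrite -(big_map d xpredT id) root_biggcd => /allP rootx.
  by have [j] := nocommon x; rewrite rootx ?map_f ?mem_enum.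
case/size_poly1P => a a_neq0 combE; exists (fun i => a^-1%:P * c i).
under eq_bigr do rewrite -mulrA.
by rewrite -mulr_sumr combE -polyCM mulVf.
Qed.

Lemma right_invertible_of_row_free_evals (F : closedFieldType) (m n : nat)
    (L : 'M[{poly F}]_(m, n)) :
  (forall x, row_free (map_mx (horner_eval x) L)) -> right_invertible L.
Proof.
move=> freeL; pose minor (f : 'I_n ^ m) := \det (colsub f L).
have [x|c comb1] := bezout_of_no_common_root (d := minor).
  have [f minor_neq0] := row_free_minor (freeL x).
  by exists f; rewrite /root /minor horner_det_colsub.
exact: right_invertible_of_minors comb1.
Qed.

Lemma poly_size_leq2E (F : fieldType) (p : {poly F}) :
  (size p <= 2)%N -> p = (p`_0)%:P + 'X * (p`_1)%:P.
Proof.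
move=> sp; apply/polyP => i; rewrite coefD coefC coefXM coefC.
case: i => [|[|i]] /=; rewrite ?addr0 ?add0r //.
by rewrite nth_default // (leq_trans sp).
Qed.

Lemma mx_poly_split (F : fieldType) (r c : nat) (W : 'M[{poly F}]_(r, c)) :
  W = map_mx polyC (map_mx (coefp 0) W) + 'X *: map_mx (drop_poly 1) W.
Proof.
apply/matrixP => i j; rewrite !mxE /=; apply/polyP => k.
rewrite coefD coefC coefXM coef_drop_poly.
by case: k => [|k] /=; rewrite ?addr0 ?add0r ?addn1.
Qed.

Lemma const_addX_mx_eq (F : fieldType) (r c : nat) (A C : 'M[F]_(r, c))
    (M : 'M[{poly F}]_(r, c)) :
  map_mx polyC A + 'X *: M = map_mx polyC C -> A = C /\ M = 0.
Proof.
move/matrixP=> AMC; split; apply/matrixP => i j; have := AMC i j; rewrite !mxE.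
  by move/(congr1 (coefp 0)); rewrite /= coefD coefXM !coefC addr0.
move/(congr1 (drop_poly 1)); rewrite drop_polyD mulrC drop_polyMXn_id.
by rewrite !drop_poly_eq0 ?size_polyC_leq1 // add0r.
Qed.

Section PencilChain.
Variables (F : fieldType) (n m : nat) (P Q : 'M[F]_(n, m)).

Definition lin_pencil : 'M[{poly F}]_(n, m) :=
  map_mx polyC P + 'X *: map_mx polyC Q.

(* [chain k] spans the constant coefficients of the polynomial row vectors W of
   degree < k for which W *m lin_pencil is constant. *)
Fixpoint chain k : 'M[F]_n :=
  if k is k'.+1 then kermx (Q *m cokermx (chain k' *m P)) else 0.

Lemma sub_chainS k r (y : 'M_(r, n)) :
  (y <= chain k.+1)%MS = (y *m Q <= chain k *m P)%MS.
Proof. by rewrite /= sub_kermx mulmxA -submxE. Qed.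

Lemma mul_lin_pencil r (A : 'M[F]_(r, n)) (B : 'M[{poly F}]_(r, n)) :
  (map_mx polyC A + 'X *: B) *m lin_pencil =
  map_mx polyC (A *m P) + 'X *: (map_mx polyC (A *m Q) + B *m lin_pencil).
Proof.
rewrite mulmxDl /lin_pencil mulmxDr -scalemxAr -!map_mxM -scalemxAl.
by rewrite scalerDr addrA.
Qed.

Lemma chain_spaceP k r (C : 'M[F]_(r, m)) :
  (C <= chain k *m P)%MS <->
  exists W : 'M[{poly F}]_(r, n),
    (forall i j, size (W i j) <= k)%N /\ W *m lin_pencil = map_mx polyC C.
Proof.
elim: k r C => [|k IH] r C.
  rewrite /= mul0mx; split=> [/submx0null -> | [W [W0 WC]]].
    by exists 0; split=> [i j|]; rewrite ?mxE ?size_poly0 // mul0mx map_mx0.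
  have W_0 : W = 0.
    by apply/matrixP => i j; rewrite mxE; apply/eqP; rewrite -size_poly_leq0.
  move: WC; rewrite W_0 mul0mx => /esym/eqP; rewrite map_mx_eq0 => /eqP ->.
  exact: sub0mx.
split=> [/submxP [D ->] | [W [Wsize WC]]].
  set Z := D *m chain k.+1.
  have /IH [W [Wsize WC]] : (- (Z *m Q) <= chain k *m P)%MS.
    by rewrite eqmx_opp -sub_chainS submxMl.
  exists (map_mx polyC Z + 'X *: W); split.
    move=> i j; rewrite !mxE (leq_trans (size_polyD _ _)) // geq_max.
    rewrite (leq_trans (size_polyC_leq1 _)) // (leq_trans (size_polyMleq _ _)) //.
    by rewrite size_polyX add2n ltnS Wsize.
  by rewrite mul_lin_pencil WC map_mxN addrN scaler0 addr0 mulmxA.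
move: WC; rewrite (mx_poly_split W) mul_lin_pencil => /const_addX_mx_eq [<- W1C].
rewrite submxMr // sub_chainS -eqmx_opp; apply/IH.
exists (map_mx (drop_poly 1) W); split.
  by move=> i j; rewrite mxE size_drop_poly leq_subLR add1n.
by rewrite map_mxN; apply/eqP; rewrite -addr_eq0 addrC W1C.
Qed.

Lemma chain_subS k : (chain k <= chain k.+1)%MS.
Proof.
elim: k => [|k IH]; first by rewrite sub0mx.
by rewrite sub_chainS (submx_trans _ (submxMr P IH)) // -sub_chainS.
Qed.

Lemma chain_space_mono j k :
  (j <= k)%N -> (chain j *m P <= chain k *m P)%MS.
Proof.
move/subnK <-; elim: (k - j)%N => [|d IH] //.
by rewrite (submx_trans IH) // addSn submxMr // chain_subS.
Qed.

Lemma chain_space_stableS k :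
  (chain k.+1 *m P <= chain k *m P)%MS ->
  (chain k.+2 *m P <= chain k.+1 *m P)%MS.
Proof.
by move=> stab; rewrite submxMr // sub_chainS (submx_trans _ stab) // -sub_chainS.
Qed.

Lemma chain_space_stable k j :
  (chain k.+1 *m P <= chain k *m P)%MS -> (k <= j)%N ->
  (chain j *m P <= chain k *m P)%MS.
Proof.
move=> stab /subnK <-.
have stabd d : (chain (d + k).+1 *m P <= chain (d + k) *m P)%MS.
  by elim: d => // d; apply: chain_space_stableS.
elim: (j - k)%N => [|d IH] //.
by rewrite addSn (submx_trans (stabd d)).
Qed.

Lemma chain_space_grow k :
  (k <= \rank (chain k *m P))%N \/
  exists2 j, (j < k)%N & (chain j.+1 *m P <= chain j *m P)%MS.
Proof.
elim: k => [|k [rk | [j jk stab]]]; first by left.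
  have [stab | grows] := boolP (chain k.+1 *m P <= chain k *m P)%MS.
    by right; exists k.
  left; apply: leq_ltn_trans rk (rank_ltmx _).
  by rewrite ltmxE chain_space_mono.
by right; exists j => //; exact: ltnW.
Qed.

Lemma chain_space_saturated k : (chain k *m P <= chain m *m P)%MS.
Proof.
have [full | [j jm stab]] := chain_space_grow m.
  by apply: submx_full; rewrite /row_full eqn_leq rank_leq_col.
apply: submx_trans (chain_space_mono (ltnW jm)).
have [kj | jk] := leqP k j; first exact: chain_space_mono.
exact: chain_space_stable stab (ltnW jk).
Qed.

End PencilChain.

Lemma pencil_right_inverse_deg_le (F : fieldType) (m n : nat)
    (L : 'M[{poly F}]_(m, n)) :
  is_pencil L -> right_invertible L ->
  exists LR : 'M[{poly F}]_(n, m), L *m LR = 1%:M /\ mx_deg_le LR m.-1.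
Proof.
move=> pencilL [X LX1].
pose P := (map_mx (coefp 0) L)^T; pose Q := (map_mx (coefp 1) L)^T.
have LTE : L^T = lin_pencil P Q.
  by apply/matrixP => i j; rewrite !mxE /=; apply: poly_size_leq2E.
have [D Xsize] : exists D, forall i j, (size (X^T i j) <= D)%N.
  exists (\max_(ij : 'I_m * 'I_n) size (X^T ij.1 ij.2)) => i j.
  exact: (leq_bigmax (i, j)).
have /chain_spaceP [W [Wsize WLT1]] : (1%:M <= chain P Q m *m P)%MS.
  apply: submx_trans (chain_space_saturated P Q D).
  apply/chain_spaceP; exists X^T; split; first exact: Xsize.
  by rewrite -LTE -trmx_mul LX1 trmx1 map_mx1.
exists W^T; split; first by rewrite -[L]trmxK -trmx_mul LTE WLT1 map_mx1 trmx1.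
by move=> i j; rewrite mxE; apply: leq_trans (Wsize j i) (leqSpred m).
Qed.

Theorem lemma5p2 (R : realType) (m n : nat) (L : 'M[{poly R[i]}]_(m, n)) :
  is_pencil L ->
  (right_invertible L <->
     ((forall l0 : R[i], ~ finite_eigenvalue L l0) /\ no_left_minimal_indices L))
  /\ (right_invertible L ->
      exists LR : 'M[{poly R[i]}]_(n, m), L *m LR = 1%:M /\ mx_deg_le LR m.-1).
Proof.
move=> pencilL; split; last exact: pencil_right_inverse_deg_le.
split=> [invL | [noeig /no_left_minimal_indicesP freeL]].
  have freeL := right_invertible_row_free_frac invL.
  split; last exact/no_left_minimal_indicesP.
  move=> x; apply/(finite_eigenvalueNP x freeL).
  exact: right_invertible_row_free_eval x invL.
apply: right_invertible_of_row_free_evals => x.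
exact/(finite_eigenvalueNP x freeL)/noeig.
Qed.
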